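(* Let $I=(I_1,\dots,I_d)\in\mathcal I_d$. If $I_j=I_k$ for some $j<k$, then $\omega_I=0$; if $I_j=\overline{I_k}$ for some $j\leq k$, then $\omega_I=0$.
   Context: $U_-$ is the universal enveloping algebra of the Lie superalgebra $L_-=L_{-2}\oplus L_{-1}$, where $L_{-2}$ has basis $\partial_1,\dots,\partial_5$ (even, central in $L_-$), $L_{-1}$ is spanned by odd elements $d_{ij}=-d_{ji}$ ($i,j\in[5]$, $d_{ii}=0$) with $[d_{ij},d_{kl}]=\varepsilon_{ijkl}\partial_{t_{ijkl}}$; if $|\{i,j,k,l\}|=4$, $t_{ijkl}$ is the fifth element of $[5]$ and $\varepsilon_{ijkl}$ the sign of the permutation $(i,j,k,l,t_{ijkl})$, otherwise $\varepsilon_{ijkl}=0$. $\mathcal I_d$ is the set of $d$-tuples of ordered pairs $I_l=(i_l,j_l)\in[5]^2$, $\overline{(i,j)}=(j,i)$, $d_I=d_{i_1j_1}\cdots d_{i_dj_d}$. For $k\neq l$ in $[d]$, $D_{\{k,l\}}(I)=\tfrac12(-1)^{k+l}\varepsilon_{i_kj_ki_lj_l}\partial_{t_{i_kj_ki_lj_l}}$. $\mathrm{SIF}_d$ is the set of sets $S$ of pairwise disjoint 2-element subsets of $[d]$; two disjoint pairs $\{k,l\},\{h,m\}$ cross if exactly one of $k,l$ is strictly between $h$ and $m$; $c(S)$ is the number of crossing pairs in $S$. $D_S(I)=\prod_{P\in S}D_P(I)$ ($D_\emptyset=1$), $C_S(I)$ is $I$ with all $I_j$, $j\in\bigcup S$,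 deleted, and $\omega_I=\sum_{S\in \mathrm{SIF}_d}(-1)^{c(S)}D_S(I)\,d_{C_S(I)}$. *)

From HB Require Import structures.
From mathcomp Require Import all_boot all_order all_algebra.
Set Implicit Arguments. Unset Strict Implicit. Unset Printing Implicit Defensive.
Import Order.TTheory GRing.Theory Num.Theory.
Local Open Scope ring_scope.

(* Indices [5] are modelled by 'I_5 (0-based); positions [d] by 'I_d (0-based). *)

Definition inversions (s : seq nat) : nat :=
  \sum_(a < size s) \sum_(b < size s | (a < b)%N)
     ((nth 0%N s b) < (nth 0%N s a))%N.

(* t_{ijkl}: the fifth element of [5] (meaningful when i,j,k,l are distinct) *)
Definition tt (i j k l : 'I_5) : 'I_5 :=
  odflt ord0 [pick x : 'I_5 | x \notin [:: i; j; k; l]].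

Definition eps (i j k l : 'I_5) : int :=
  if uniq [:: i; j; k; l]
  then (-1) ^+ inversions [seq nat_of_ord x | x <- [:: i; j; k; l; tt i j k l]]
  else 0.

Section Omega.
Variables (K : fieldType) (A : algType K).
Variables (dd : 'I_5 -> A) (dgen : 'I_5 -> 'I_5 -> A).

Definition Dpair (n : nat) (I : 'I_n -> 'I_5 * 'I_5) (k l : 'I_n) : A :=
  (2%:R^-1 : K) *:
    ((-1) ^+ (k + l)%N * (eps (I k).1 (I k).2 (I l).1 (I l).2)%:~R
       * dd (tt (I k).1 (I k).2 (I l).1 (I l).2)).

Definition Dset (n : nat) (I : 'I_n -> 'I_5 * 'I_5) (P : {set 'I_n}) : A :=
  match enum P with [:: k; l] => Dpair I k l | _ => 0 end.

Definition DS (n : nat) (I : 'I_n -> 'I_5 * 'I_5) (S : {set {set 'I_n}}) : A :=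
  \prod_(P in S) Dset I P.

Definition dC (n : nat) (I : 'I_n -> 'I_5 * 'I_5) (S : {set {set 'I_n}}) : A :=
  \prod_(j < n | j \notin cover S) dgen (I j).1 (I j).2.

End Omega.

Definition sif (n : nat) : {set {set {set 'I_n}}} :=
  [set S : {set {set 'I_n}} | [forall P in S, #|P| == 2%N] && trivIset S].

Definition strictly_between (n : nat) (x h m : 'I_n) : bool :=
  (minn h m < x < maxn h m)%N.

Definition crossing (n : nat) (P Q : {set 'I_n}) : bool :=
  match enum P, enum Q with
  | [:: k; l], [:: h; m] => strictly_between k h m (+) strictly_between l h m
  | _, _ => false
  end.

(* c(S): number of (unordered) crossing pairs in S; ordered pairs counted / 2 *)
Definition ncross (n : nat) (S : {set {set 'I_n}}) : nat :=
  (#|[set PQ : {set 'I_n} * {set 'I_n} |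
       [&& PQ.1 \in S, PQ.2 \in S & crossing PQ.1 PQ.2]]|)./2.

Definition omega (K : fieldType) (A : algType K)
    (dd : 'I_5 -> A) (dgen : 'I_5 -> 'I_5 -> A)
    (n : nat) (I : 'I_n -> 'I_5 * 'I_5) : A :=
  \sum_(S in sif n) (-1) ^+ ncross S * DS dd I S * dC dgen I S.

Definition bar (p : 'I_5 * 'I_5) : 'I_5 * 'I_5 := (p.2, p.1).

From HB Require Import structures.
From mathcomp Require Import all_boot all_order all_algebra perm zify.
Import Order.TTheory GRing.Theory Num.Theory.

Set Implicit Arguments. Unset Strict Implicit. Unset Printing Implicit Defensive.

(* Two symmetries of omega_I do all the work.  Reversing one entry I_j negates
   omega_I, because d_ji = - d_ij and eps is antisymmetric in its first pair of
   arguments.  Exchanging two adjacent entries I_p, I_(p+1) also negates omega_I: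
   match the summand of S for the exchanged word with the summand of sigma(S),
   sigma = (p p+1).  If exactly one of p, p+1 is covered by S, D_S changes sign
   and the crossing number does not; if they are covered by two different pairs,
   D_S keeps its sign and the crossing number changes parity.  Otherwise S and
   {p,p+1} u S give four summands that cancel, because
   d_(I_p) d_(I_(p+1)) + d_(I_(p+1)) d_(I_p) = - 2 D_{p,p+1}(I) is central.
   So if I_j = I_k, bringing I_k next to I_j by adjacent exchanges and swapping
   the two equal entries gives omega_I = - omega_I, hence omega_I = 0 as 2 is
   invertible; I_j = bar I_k reduces to this case by reversing I_j. *)

Definition swap_adj (p x : nat) : nat :=
  if x == p then p.+1 else if x == p.+1 then p else x.

Definition between (x h m : nat) : bool := minn h m < x < maxn h m.

Definition cross (k l h m : nat) : bool := between k h m (+) between l h m.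

Lemma crossCl k l h m : cross l k h m = cross k l h m.
Proof. by rewrite /cross addbC. Qed.

Lemma crossCr k l h m : cross k l m h = cross k l h m.
Proof. by rewrite /cross /between minnC maxnC. Qed.

Lemma cross_diag k l : cross k l k l = false.
Proof. by rewrite /cross /between; apply/negbTE; lia. Qed.

Lemma crossC k l h m : uniq [:: k; l; h; m] -> cross k l h m = cross h m k l.
Proof.
rewrite /= !inE !negb_or => /and4P[/and3P[kl kh km] /andP[lh lm] hm _].
rewrite /cross /between.
case: (minn h m < k < maxn h m) / idP; case: (minn h m < l < maxn h m) / idP;
case: (minn k l < h < maxn k l) / idP; case: (minn k l < m < maxn k l) / idP => //=; lia.
Qed.

Lemma cross_adj h m p : cross h m p p.+1 = false.
Proof.
have nb x : between x p p.+1 = false by apply/negbTE; rewrite /between; lia.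
by rewrite /cross !nb.
Qed.

Lemma between_swap_adj p x h m : x != h -> x != m -> h != m ->
  ~~ ((h == p) && (m == p.+1) || (h == p.+1) && (m == p)) ->
  between (swap_adj p x) (swap_adj p h) (swap_adj p m) =
  between x h m (+) ((x == p) && ((h == p.+1) || (m == p.+1))
                     || (x == p.+1) && ((h == p) || (m == p))).
Proof.
rewrite /swap_adj /between.
case: (x =P p) => ?; case: (x =P p.+1) => ?; case: (h =P p) => ?;
case: (h =P p.+1) => ?; case: (m =P p) => ?; case: (m =P p.+1) => ? //=;
try lia; apply/idP/idP; lia.
Qed.

Lemma cross_swap_adj p k l h m :
  uniq [:: k; l; h; m] ->
  ~~ ((k == p) && (l == p.+1) || (k == p.+1) && (l == p)) ->
  ~~ ((h == p) && (m == p.+1) || (h == p.+1) && (m == p)) ->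
  cross (swap_adj p k) (swap_adj p l) (swap_adj p h) (swap_adj p m) =
  cross k l h m (+) (((k == p) || (l == p)) && ((h == p.+1) || (m == p.+1)) ||
                     ((k == p.+1) || (l == p.+1)) && ((h == p) || (m == p))).
Proof.
move=> + nkl nhm; rewrite /= !inE !negb_or => /and4P[/and3P[kl kh km] /andP[lh lm] hm _].
rewrite /cross !between_swap_adj //.
move: (between k h m) (between l h m) => b1 b2.
move: kl kh km lh lm hm nkl nhm.
case: (k =P p) => ?; case: (k =P p.+1) => ?; case: (l =P p) => ?;
case: (l =P p.+1) => ?; case: (h =P p) => ?; case: (h =P p.+1) => ?;
case: (m =P p) => ?; case: (m =P p.+1) => ? /=;
move=> *; first [by case: b1; case: b2 | exfalso; lia].
Qed.

Lemma enum_set2 (T : finType) (x y : T) : x != y ->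
  enum [set x; y] = [:: x; y] \/ enum [set x; y] = [:: y; x].
Proof.
move=> xy.
have Hs : size (enum [set x; y]) = 2 by rewrite -cardE cards2 xy.
have Hx : x \in enum [set x; y] by rewrite mem_enum set21.
have Hy : y \in enum [set x; y] by rewrite mem_enum set22.
move: Hs (enum_uniq (mem [set x; y])) Hx Hy; case: (enum _) => [|a [|b [|]]] //= _.
rewrite !inE andbT => ab /orP[]/eqP hx /orP[]/eqP hy; subst.
- by rewrite eqxx in xy.
- by left.
- by right.
- by rewrite eqxx in xy.
Qed.

Lemma crossing_set2 n (k l h m : 'I_n) : k != l -> h != m ->
  crossing [set k; l] [set h; m] = cross k l h m.
Proof.
move=> kl hm; rewrite /crossing.
case: (enum_set2 kl) => ->; case: (enum_set2 hm) => -> //=.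
- by rewrite [RHS]crossCr.
- by rewrite [RHS]crossCl.
- by rewrite [RHS]crossCl crossCr.
Qed.

Lemma uniq_disjoint_set2 n (k l h m : 'I_n) : k != l -> h != m ->
  [disjoint [set k; l] & [set h; m]] -> uniq [:: k : nat; l : nat; h : nat; m : nat].
Proof.
move=> kl hm dj; rewrite /= !inE !val_eqE (negbTE kl) (negbTE hm) /= andbT.
move: (disjointFr dj (set21 k l)) (disjointFr dj (set22 k l)).
by rewrite !inE => /norP[/negbTE-> /negbTE->] /norP[/negbTE-> /negbTE->].
Qed.

Lemma cover_mem (T : finType) (S : {set {set T}}) P x :
  P \in S -> x \in P -> x \in cover S.
Proof. by move=> PS xP; apply/bigcupP; exists P. Qed.

Lemma mem_pblockE (T : finType) (S : {set {set T}}) P x : trivIset S -> P \in S ->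
  x \in cover S -> (x \in P) = (P == pblock S x).
Proof.
move=> tiS PS xS; apply/idP/eqP => [xP|->]; last by rewrite mem_pblock.
by rewrite (def_pblock tiS PS xP).
Qed.

Section Sif.
Variable n : nat.
Implicit Types (S : {set {set 'I_n}}) (P Q : {set 'I_n}).

Lemma sif_card S P : S \in sif n -> P \in S -> #|P| = 2.
Proof. by rewrite inE => /andP[/forall_inP cardS _] /cardS /eqP. Qed.

Lemma sif_trivIset S : S \in sif n -> trivIset S.
Proof. by rewrite inE => /andP[]. Qed.

Lemma sif_set2 S P : S \in sif n -> P \in S -> exists k l, k != l /\ P = [set k; l].
Proof. by move=> sifS /(sif_card sifS) /eqP /cards2P. Qed.

Lemma sif_disjoint S P Q : S \in sif n -> P \in S -> Q \in S -> P != Q ->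
  [disjoint P & Q].
Proof. by move/sif_trivIset/trivIsetP; apply. Qed.

Lemma sif_crossingC S P Q : S \in sif n -> P \in S -> Q \in S ->
  crossing P Q = crossing Q P.
Proof.
move=> sifS PS QS; have [->//|PQ] := eqVneq P Q.
have dPQ := sif_disjoint sifS PS QS PQ.
have [k [l [kl EP]]] := sif_set2 sifS PS; have [h [m [hm EQ]]] := sif_set2 sifS QS.
subst P Q; rewrite !crossing_set2 // crossC //; exact: uniq_disjoint_set2.
Qed.

End Sif.

Section TpermSets.
Variables (T : finType) (a b : T).
Implicit Types (S : {set {set T}}) (P : {set T}).

Local Notation sw := (tperm a b).

Definition tperm_sets S := [set sw @: P | P : {set T} in S].

Lemma mem_tperm_imset x P : (x \in sw @: P) = (sw x \in P).
Proof. by rewrite (can2_imset_pre _ (tpermK a b) (tpermK a b)) inE. Qed.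

Lemma tperm_imsetK P : sw @: (sw @: P) = P.
Proof. by apply/setP => x; rewrite !mem_tperm_imset tpermK. Qed.

Lemma tperm_set2 x y : sw @: [set x; y] = [set sw x; sw y].
Proof. by rewrite imsetU1 imset_set1. Qed.

Lemma mem_tperm_sets P S : (P \in tperm_sets S) = (sw @: P \in S).
Proof.
have swK : cancel (fun Q : {set T} => sw @: Q) (fun Q => sw @: Q) := tperm_imsetK.
by rewrite /tperm_sets (can2_imset_pre _ swK swK) inE.
Qed.

Lemma tperm_setsK S : tperm_sets (tperm_sets S) = S.
Proof. by apply/setP => P; rewrite !mem_tperm_sets tperm_imsetK. Qed.

Lemma cover_tperm_sets x S : (x \in cover (tperm_sets S)) = (sw x \in cover S).
Proof. by rewrite cover_imset -imset_cover mem_tperm_imset. Qed.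

Lemma tperm_sets_id S : trivIset S ->
  ([set a; b] \in S) || (a \notin cover S) && (b \notin cover S) -> tperm_sets S = S.
Proof.
move=> tiS abS; rewrite -[RHS]imset_id; apply: eq_in_imset => P PS.
have [->|Pab] := eqVneq P [set a; b]; first by rewrite tperm_set2 tpermL tpermR setUC.
have : {in P, forall x, x \notin [set a; b]}.
  move=> x xP; case/orP: abS => [abS | /andP[aS bS]].
    by rewrite (disjointFr ((trivIsetP tiS) _ _ PS abS Pab) xP).
  by rewrite !inE; apply/norP; split; apply/eqP => xE; subst x;
    [case/negP: aS | case/negP: bS]; exact: cover_mem PS xP.
move=> Pnab; rewrite -[RHS]imset_id; apply: eq_in_imset => x /Pnab.
by rewrite !inE => /norP[xa xb]; rewrite tpermD // eq_sym.
Qed.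

End TpermSets.

Lemma sif_tperm_sets n (a b : 'I_n) S : (tperm_sets a b S \in sif n) = (S \in sif n).
Proof.
rewrite !inE (imset_trivIset _ (@perm_inj _ (tperm a b))); congr (_ && _).
apply/forall_inP/forall_inP => card2 P PS.
- rewrite -(card_imset _ (@perm_inj _ (tperm a b))); apply: card2.
  by rewrite mem_tperm_sets tperm_imsetK.
- by rewrite -(card_imset _ (@perm_inj _ (tperm a b))); apply: card2; rewrite -mem_tperm_sets.
Qed.

Lemma set2_of_card2 (T : finType) (P : {set T}) a b :
  #|P| = 2 -> a != b -> a \in P -> b \in P -> P = [set a; b].
Proof.
move=> cP ab aP bP; apply/eqP; rewrite eq_sym eqEcard cP cards2 ab leqnn andbT.
by apply/subsetP => x; rewrite !inE => /orP[]/eqP->.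
Qed.

Lemma sign_halfcard_flip (R : pzRingType) (T : finType) (X Z : {set T}) a b :
  a != b -> (a \in X) = (b \in X) ->
  (forall x, (x \in Z) = (x \in X) (+) ((x == a) || (x == b))) ->
  ((-1) ^+ (#|Z|./2) = - (-1) ^+ (#|X|./2) :> R)%R.
Proof.
move=> ab abX HZ.
have flip (Y W : {set T}) : a \in Y -> b \in Y ->
    (forall x, (x \in W) = (x \in Y) (+) ((x == a) || (x == b))) -> #|Y| = #|W|.+2.
  move=> aY bY HW; rewrite (cardsD1 a) aY (cardsD1 b) !inE eq_sym ab bY.
  congr (_.+2); apply: eq_card => x; rewrite !inE HW.
  have [->|_] := eqVneq x a; first by rewrite /= andbF aY.
  by have [->|_] := eqVneq x b; rewrite /= ?bY ?addbF.
have [aX|aX] := boolP (a \in X).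
  by rewrite (flip X Z) -?abX //= exprS mulN1r opprK.
have aZ : a \in Z by rewrite HZ (negbTE aX) eqxx.
have bZ : b \in Z by rewrite HZ -abX (negbTE aX) eqxx orbT.
rewrite (flip Z X aZ bZ) /= ?exprS ?mulN1r // => x.
by rewrite HZ -addbA addbb addbF.
Qed.

Section AdjacentTransposition.
Variables (n : nat) (p p' : 'I_n).
Hypothesis hp : p' = p.+1 :> nat.
Implicit Types (S : {set {set 'I_n}}) (P Q : {set 'I_n}).

Local Notation sw := (tperm p p').
Local Notation pp := [set p; p'].

Lemma adj_neq : p != p'.
Proof. by apply/eqP => E; move: hp; rewrite E; lia. Qed.

Lemma val_tperm_adj x : sw x = swap_adj p x :> nat.
Proof.
rewrite /swap_adj -hp !val_eqE.
case: tpermP => [->|->|/eqP/negbTE-> /eqP/negbTE->] //; first by rewrite eqxx.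
by rewrite eq_sym (negbTE adj_neq) eqxx.
Qed.

Lemma not_adj_pair (k l : 'I_n) : [set k; l] != pp ->
  ~~ ((k == p :> nat) && (l == p.+1 :> nat) || (k == p.+1 :> nat) && (l == p :> nat)).
Proof.
by rewrite -hp !val_eqE; apply: contra => /orP[]/andP[/eqP-> /eqP->] //; rewrite setUC.
Qed.

Lemma crossing_tperm S P Q : S \in sif n -> pp \notin S -> P \in S -> Q \in S ->
  crossing (sw @: P) (sw @: Q) =
  crossing P Q (+) ((p \in P) && (p' \in Q) || (p' \in P) && (p \in Q)).
Proof.
move=> sifS ppS PS QS.
have [k [l [kl EP]]] := sif_set2 sifS PS.
have [<-|PQ] := eqVneq P Q.
  rewrite {1 2 3 4}EP tperm_set2 !crossing_set2 ?(inj_eq perm_inj) // !cross_diag /=.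
  rewrite andbC orbb; apply/esym/negbTE/andP => -[p'P pP].
  case/negP: ppS.
  by rewrite -(set2_of_card2 (sif_card sifS PS) adj_neq pP p'P).
have [h [m [hm EQ]]] := sif_set2 sifS QS.
have dPQ := sif_disjoint sifS PS QS PQ; subst P Q.
have ppkl : [set k; l] != pp by apply: contraNneq ppS => <-.
have pphm : [set h; m] != pp by apply: contraNneq ppS => <-.
rewrite !tperm_set2 !crossing_set2 ?(inj_eq perm_inj) // !val_tperm_adj.
rewrite cross_swap_adj ?not_adj_pair ?uniq_disjoint_set2 //; congr (_ (+) _).
by rewrite !inE -!val_eqE /= hp !(eq_sym (nat_of_ord p)) !(eq_sym (nat_of_ord p).+1).
Qed.

Lemma ncross_tperm_sets (R : pzRingType) S : S \in sif n -> pp \notin S ->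
  ((-1) ^+ ncross (tperm_sets p p' S) =
   (-1) ^+ ((p \in cover S) && (p' \in cover S)) * (-1) ^+ ncross S :> R)%R.
Proof.
move=> sifS ppS; rewrite /ncross.
set Z := [set PQ : {set 'I_n} * {set 'I_n} |
  [&& PQ.1 \in S, PQ.2 \in S & crossing (sw @: PQ.1) (sw @: PQ.2)]].
pose swPQ (PQ : {set 'I_n} * {set 'I_n}) := (sw @: PQ.1, sw @: PQ.2).
have swK : involutive swPQ by move=> [P Q]; rewrite /swPQ /= !tperm_imsetK.
have -> : [set PQ | [&& PQ.1 \in tperm_sets p p' S, PQ.2 \in tperm_sets p p' S
                      & crossing PQ.1 PQ.2]] = swPQ @^-1: Z.
  by apply/setP => -[P Q]; rewrite !inE /= !mem_tperm_sets !tperm_imsetK.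
rewrite card_preimset; last exact: can_inj swK.
have [/andP[pS p'S]|nS] := boolP ((p \in cover S) && (p' \in cover S)).
  have pbS x : x \in cover S -> pblock S x \in S := @pblock_mem _ S x.
  rewrite expr1 mulN1r; apply: (sign_halfcard_flip _ (a := (pblock S p, pblock S p'))
                                                  (b := (pblock S p', pblock S p))).
  - rewrite xpair_eqE negb_and; apply/orP; left; apply: contraNneq ppS => E.
    have pP : p \in pblock S p by rewrite mem_pblock.
    have p'P : p' \in pblock S p by rewrite E mem_pblock.
    by rewrite -(set2_of_card2 (sif_card sifS (pbS _ pS)) adj_neq pP p'P) pbS.
  - by rewrite !inE /= !pbS //= (sif_crossingC sifS) ?pbS.
  have notS P x : P \notin S -> x \in cover S -> (P == pblock S x) = false.
    by move=> PS xS; apply: contraNF PS => /eqP->; exact: pbS.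
  move=> [P Q]; rewrite !inE /= !xpair_eqE.
  have [PS|PS] := boolP (P \in S); last by rewrite /= !(notS P).
  have [QS|QS] := boolP (Q \in S); last by rewrite /= !(notS Q) ?andbF.
  have tiS := sif_trivIset sifS.
  rewrite /= (crossing_tperm sifS ppS PS QS).
  by rewrite !(mem_pblockE tiS PS) // !(mem_pblockE tiS QS).
rewrite expr0 mul1r; congr (_ ^+ (_ ./2))%R; apply: eq_card => -[P Q]; rewrite !inE /=.
have [PS|] := boolP (P \in S) => //=; have [QS|] := boolP (Q \in S) => //=.
rewrite (crossing_tperm sifS ppS PS QS) (_ : _ || _ = false) ?addbF //.
apply: contraNF nS => /orP[]/andP[xP yQ].
- by rewrite (cover_mem PS xP) (cover_mem QS yQ).
- by rewrite (cover_mem PS xP) (cover_mem QS yQ).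
Qed.

Lemma crossing_adj_pair S Q : S \in sif n -> p \notin cover S -> p' \notin cover S ->
  Q \in S -> crossing pp Q = false /\ crossing Q pp = false.
Proof.
move=> sifS pS p'S QS; have [h [m [hm EQ]]] := sif_set2 sifS QS.
have dj : [disjoint pp & Q].
  rewrite -setI_eq0; apply/eqP/setP => x; rewrite !inE.
  apply/negbTE/andP => -[/orP[]/eqP-> /(cover_mem QS) xS].
  - by rewrite xS in pS.
  - by rewrite xS in p'S.
subst Q; have cQ : cross h m p p' = false by rewrite hp cross_adj.
rewrite !crossing_set2 ?adj_neq // crossC ?cQ //; exact: uniq_disjoint_set2 adj_neq hm dj.
Qed.

Lemma ncross_setU1_adj S : S \in sif n -> p \notin cover S -> p' \notin cover S ->
  ncross (pp |: S) = ncross S.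
Proof.
move=> sifS pS p'S.
have ppS : pp \notin S by apply: contra pS => /cover_mem; apply; rewrite set21.
have cpp : crossing pp pp = false by rewrite crossing_set2 ?adj_neq ?cross_diag.
rewrite /ncross; congr (_ ./2); apply: eq_card => -[P Q]; rewrite !inE /=.
have [->|_] := eqVneq P pp; have [->|_] := eqVneq Q pp; rewrite /= ?(negbTE ppS) ?cpp //.
- by case: (boolP (Q \in S)) => //= QS; rewrite (crossing_adj_pair sifS pS p'S QS).1.
- by case: (boolP (P \in S)) => //= PS; rewrite (crossing_adj_pair sifS pS p'S PS).2.
Qed.

End AdjacentTransposition.

Lemma sif_setU1 n (a b : 'I_n) (S : {set {set 'I_n}}) : a != b -> [set a; b] \notin S ->
  ([set a; b] |: S \in sif n) = [&& S \in sif n, a \notin cover S & b \notin cover S].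
Proof.
move=> ab abS; apply/idP/and3P => [sifU | [sifS aS bS]].
  have sifS : S \in sif n.
    rewrite inE (trivIsetS (subsetUr _ _) (sif_trivIset sifU)) andbT.
    by apply/forall_inP => P PS; rewrite (sif_card sifU) ?setU1r.
  have ncov x : x \in [set a; b] -> x \notin cover S.
    move=> xab; apply: contra abS => xS.
    rewrite -(def_pblock (sif_trivIset sifU) (setU11 _ _) xab).
    have tiU := sif_trivIset sifU.
    by rewrite (def_pblock tiU (setU1r _ (pblock_mem xS))) ?mem_pblock ?pblock_mem.
  by split; rewrite // ncov // !inE eqxx ?orbT.
rewrite inE; apply/andP; split.
  apply/forall_inP => P; rewrite in_setU1 => /orP[/eqP->|PS]; first by rewrite cards2 ab.
  by rewrite (sif_card sifS PS).
apply: (trivIsetU1 _ (sif_trivIset sifS) _).1.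
  move=> P PS; rewrite -setI_eq0; apply/eqP/setP => x; rewrite !inE.
  apply/negbTE/andP => -[/orP[]/eqP-> /(cover_mem PS) xS].
  - by rewrite xS in aS.
  - by rewrite xS in bS.
by apply/negP => /(sif_card sifS); rewrite cards0.
Qed.

Local Open Scope ring_scope.

Lemma inversions5 (a b c d e : nat) : inversions [:: a; b; c; d; e] =
  ((b < a) + (c < a) + (d < a) + (e < a) + (c < b) + (d < b) + (e < b)
   + (d < c) + (e < c) + (e < d))%N.
Proof.
rewrite /inversions /= !big_ord_recl big_ord0 /=.
do 5! rewrite big_mkcond /= !big_ord_recl big_ord0 /=.
rewrite /bump /=; lia.
Qed.

Lemma signr_adj (x y : nat) : x = y.+1 \/ y = x.+1 -> (-1) ^+ x = - (-1) ^+ y :> int.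
Proof. by case=> ->; rewrite exprS mulN1r ?opprK. Qed.

Lemma signr_double (x y c d : nat) : (x + c.*2 = y + d.*2)%N -> (-1) ^+ x = (-1) ^+ y :> int.
Proof.
move/(congr1 odd); rewrite !oddD !odd_double !addbF => Exy.
by rewrite -signr_odd Exy signr_odd.
Qed.

Lemma tt_swap12 (i j k l : 'I_5) : tt j i k l = tt i j k l.
Proof.
by congr odflt; apply: eq_pick => x; rewrite !inE; case: (x == i); case: (x == j).
Qed.

Lemma tt_pairC (i j k l : 'I_5) : tt k l i j = tt i j k l.
Proof.
congr odflt; apply: eq_pick => x; rewrite !inE.
by case: (x == i); case: (x == j); case: (x == k); case: (x == l).
Qed.

Lemma eps_swap12 (i j k l : 'I_5) : eps j i k l = - eps i j k l.
Proof.
rewrite /eps tt_swap12 (@perm_uniq _ [:: j; i; k; l] [:: i; j; k; l]); last first.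
  by apply/seq.permP => x /=; lia.
case: ifP => [/= u|_]; last by rewrite oppr0.
apply: signr_adj; rewrite !inversions5.
by move: u; rewrite !inE !negb_or -!val_eqE /=; lia.
Qed.

Lemma eps_pairC (i j k l : 'I_5) : eps k l i j = eps i j k l.
Proof.
rewrite /eps tt_pairC (@perm_uniq _ [:: k; l; i; j] [:: i; j; k; l]); last first.
  by apply/seq.permP => x /=; lia.
case: ifP => [/= u|] //; rewrite !inversions5.
apply: (@signr_double _ _ ((k < i) + (l < i) + (k < j) + (l < j)) 2).
by move: u; rewrite !inE !negb_or -!val_eqE /=; lia.
Qed.


Section CommutingProducts.
Variables (R : pzRingType) (I : eqType) (F : I -> R).
Hypothesis Fcomm : forall a b, GRing.comm (F a) (F b).

Lemma prodr_rem_comm r x : x \in r -> \prod_(i <- r) F i = F x * \prod_(i <- rem x r) F i.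
Proof.
elim: r => [//|y r IH]; rewrite inE big_cons /=.
have [->//|yx /= xr] := eqVneq y x.
by rewrite big_cons (IH xr) !mulrA Fcomm.
Qed.

Lemma prodr_perm_comm r1 r2 : perm_eq r1 r2 -> \prod_(i <- r1) F i = \prod_(i <- r2) F i.
Proof.
elim: r1 r2 => [|x r1 IH] r2 r12; first by move/perm_size: r12 => /esym/size0nil ->.
have xr2 : x \in r2 by rewrite -(perm_mem r12) mem_head.
rewrite (prodr_rem_comm xr2) big_cons; congr (_ * _); apply: IH.
by rewrite -(perm_cons x); apply: perm_trans r12 _; apply: perm_to_rem.
Qed.

End CommutingProducts.

Section CommutingSetProducts.
Variable R : pzRingType.

Lemma prodr_set_comm (T : finType) (F : T -> R) (A : {pred T}) r :
  (forall a b, GRing.comm (F a) (F b)) -> uniq r -> A =i r ->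
  \prod_(i in A) F i = \prod_(i <- r) F i.
Proof.
move=> Fcomm ur Ar; rewrite -big_filter; apply: prodr_perm_comm => //.
apply: uniq_perm; rewrite ?filter_uniq ?index_enum_uniq // => x.
by rewrite mem_filter mem_index_enum andbT Ar.
Qed.

Lemma prodr_setU1_comm (T : finType) (F : T -> R) a (A : {set T}) :
  (forall a b, GRing.comm (F a) (F b)) -> a \notin A ->
  \prod_(i in a |: A) F i = F a * \prod_(i in A) F i.
Proof.
move=> Fcomm aA; rewrite (prodr_set_comm (r := a :: enum A)) ?big_cons //; last first.
- by move=> x; rewrite in_setU1 inE mem_enum.
- by rewrite /= mem_enum aA enum_uniq.
by rewrite (prodr_set_comm Fcomm (enum_uniq A)) // => x; rewrite mem_enum.
Qed.

Lemma prodr_imset_comm (aT T : finType) (F : T -> R) (h : aT -> T) (A : {set aT}) :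
  (forall a b, GRing.comm (F a) (F b)) -> injective h ->
  \prod_(i in h @: A) F i = \prod_(j in A) F (h j).
Proof.
move=> Fcomm hinj; rewrite (prodr_set_comm (r := map h (enum A))) ?big_map //; last first.
- by move=> x; apply/imsetP/mapP => -[y yA ->]; exists y; rewrite ?mem_enum in yA *.
- by rewrite map_inj_uniq ?enum_uniq.
rewrite (@prodr_set_comm _ (F \o h) _ _ (fun a b => Fcomm (h a) (h b)) (enum_uniq A)) // => x.
by rewrite mem_enum.
Qed.

End CommutingSetProducts.

Section AdjacentFactors.
Variables (R : pzRingType) (n : nat) (p p' : 'I_n).
Hypothesis hp : p' = p.+1 :> nat.

Lemma prod_ord_adj (F : 'I_n -> R) : \prod_(j < n) F j =
  \prod_(j < n | (j < p)%N) F j * (F p * F p') * \prod_(j < n | (p' < j)%N) F j.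
Proof.
pose G k := oapp F 1 (insub k).
have GE (j : 'I_n) : G j = F j by rewrite /G valK.
have toNat (P : pred nat) :
    \prod_(j < n | P (nat_of_ord j)) F j = \prod_(0 <= k < n | P k) G k.
  by rewrite big_mkord; apply: eq_bigr => j _; rewrite GE.
have pn : (p.+2 <= n)%N by rewrite -hp; exact: ltn_ord.
rewrite (toNat xpredT) (toNat (fun k => k < p)%N) (toNat (fun k => p' < k)%N) hp.
have -> : \prod_(0 <= k < n | (k < p)%N) G k = \prod_(0 <= k < p) G k.
  by rewrite [RHS](big_nat_widen _ _ n) //; lia.
have -> : \prod_(0 <= k < n | (p.+1 < k)%N) G k = \prod_(p.+2 <= k < n) G k.
  by rewrite (big_nat_widenl p.+2 0).
rewrite (big_cat_nat _ (n := p)) //=; last by lia.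
rewrite (big_cat_nat _ (n := p.+2) (m := p)) //; last by lia.
rewrite (big_ltn (leqnSn p.+1)) big_nat1 -hp !GE.
by rewrite !mulrA.
Qed.

Lemma prod_tperm_adj (F : 'I_n -> R) : \prod_(j < n) F (tperm p p' j) =
  \prod_(j < n | (j < p)%N) F j * (F p' * F p) * \prod_(j < n | (p' < j)%N) F j.
Proof.
rewrite prod_ord_adj tpermL tpermR; congr (_ * _ * _); apply: eq_bigr => j jp;
  by rewrite tpermD //; apply: contraTneq jp => <-; lia.
Qed.

End AdjacentFactors.

Lemma prod_tperm_adj_comm (R : pzRingType) n (p p' : 'I_n) (F : 'I_n -> R) :
  p' = p.+1 :> nat -> GRing.comm (F p) (F p') ->
  \prod_(j < n) F (tperm p p' j) = \prod_(j < n) F j.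
Proof. by move=> hp Fpp'; rewrite (prod_tperm_adj hp) (prod_ord_adj hp) Fpp'. Qed.

Lemma eq_opp_eq0 (K : fieldType) (V : lmodType K) (x : V) :
  (2%:R : K) != 0 -> x = - x -> x = 0.
Proof.
move=> two0 xN; apply/eqP; have := scaler_eq0 (2%:R : K) x.
by rewrite (negbTE two0) /= => <-; rewrite scaler_nat mulr2n {1}xN addNr.
Qed.

Lemma commrZ (K : fieldType) (A : algType K) (x y : A) (a : K) :
  GRing.comm x y -> GRing.comm x (a *: y).
Proof. by rewrite /GRing.comm -scalerAl -scalerAr => ->. Qed.

Section DOperators.
Variables (K : fieldType) (A : algType K) (dd : 'I_5 -> A).
Hypothesis hdd : forall i j, dd i * dd j = dd j * dd i.

Section Positions.
Variable n : nat.
Implicit Types (I J : 'I_n -> 'I_5 * 'I_5) (P Q : {set 'I_n}) (S : {set {set 'I_n}}).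

Lemma commr_Dset (x : A) I P : (forall i, GRing.comm x (dd i)) -> GRing.comm x (Dset dd I P).
Proof.
move=> xdd; rewrite /Dset; case: (enum P) => [|k [|l [|m s]]] /=; try exact: commr0.
by apply/commrZ/commrM; [apply/commrM; [apply: commr_sign | apply: commr_int] | apply: xdd].
Qed.

Lemma comm_dd_Dset i I P : GRing.comm (dd i) (Dset dd I P).
Proof. exact: commr_Dset (hdd i). Qed.

Lemma comm_Dset I J P Q : GRing.comm (Dset dd I P) (Dset dd J Q).
Proof. by apply: commr_Dset => i; apply/commr_sym/comm_dd_Dset. Qed.

Lemma comm_dd_DS i I S : GRing.comm (dd i) (DS dd I S).
Proof. by apply: commr_prod => P _; apply: comm_dd_Dset. Qed.

Lemma DS_setU1 I P S : P \notin S -> DS dd I (P |: S) = Dset dd I P * DS dd I S.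
Proof. exact: prodr_setU1_comm (comm_Dset I I). Qed.

Lemma Dpair_sym I k l : Dpair dd I k l = Dpair dd I l k.
Proof. by rewrite /Dpair addnC eps_pairC tt_pairC. Qed.

Lemma Dset_set2 I k l : k != l -> Dset dd I [set k; l] = Dpair dd I k l.
Proof. by move=> kl; rewrite /Dset; case: (enum_set2 kl) => -> //; exact: Dpair_sym. Qed.

End Positions.

End DOperators.

Lemma sum_mem_set2 (T : finType) (a b : T) (C : {set T}) : a != b ->
  (\sum_(x in C) (x \in [set a; b]) = (a \in C) + (b \in C))%N.
Proof.
move=> ab; rewrite big_mkcond (bigD1 a) //= (bigD1 b) /=; last by rewrite eq_sym.
rewrite big1 => [|x /andP[xa xb]]; last first.
  by rewrite !inE (negbTE xa) (negbTE xb); case: (x \in C).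
by rewrite set21 set22 addn0; case: (a \in C); case: (b \in C).
Qed.

Section Terms.
Variables (K : fieldType) (A : algType K) (dd : 'I_5 -> A) (dgen : 'I_5 -> 'I_5 -> A).
Variables (n : nat) (I : 'I_n -> 'I_5 * 'I_5).

Definition omega_summand S := (-1) ^+ ncross S * DS dd I S * dC dgen I S.

Definition dC_factor S (j : 'I_n) : A := if j \notin cover S then dgen (I j).1 (I j).2 else 1.

Lemma omegaE : omega dd dgen I = \sum_(S in sif n) omega_summand S.
Proof. by []. Qed.

Lemma dC_factorE S : dC dgen I S = \prod_(j < n) dC_factor S j.
Proof. exact: big_mkcond. Qed.

End Terms.

Section AdjacentSwap.
Variables (K : fieldType) (A : algType K) (dd : 'I_5 -> A) (dgen : 'I_5 -> 'I_5 -> A).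
Hypothesis hdd : forall i j, dd i * dd j = dd j * dd i.
Variables (n : nat) (p p' : 'I_n).
Hypothesis hp : p' = p.+1 :> nat.
Variable I : 'I_n -> 'I_5 * 'I_5.
Implicit Types (S : {set {set 'I_n}}) (P : {set 'I_n}).

Local Notation sw := (tperm p p').
Local Notation pp := [set p; p'].

Lemma odd_tperm_adj (k : 'I_n) : odd (sw k) = odd k (+) (k \in pp).
Proof.
rewrite (val_tperm_adj hp) /swap_adj !inE -!val_eqE /= hp.
case: eqP => [->|_] /=; first by rewrite addbT.
by case: eqP => [->|_] /=; rewrite ?addbT ?negbK ?addbF.
Qed.

Lemma Dpair_tperm_adj k l : Dpair dd (I \o sw) (sw k) (sw l) =
  (-1) ^+ ((k \in pp) + (l \in pp)) * Dpair dd I k l.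
Proof.
rewrite /Dpair /= !tpermK -scalerAr !mulrA -exprD -signr_odd -[in RHS]signr_odd.
rewrite !oddD !odd_tperm_adj.
by case: (odd k); case: (odd l); case: (k \in pp); case: (l \in pp).
Qed.

Lemma DS_tperm_sets S : S \in sif n -> DS dd (I \o sw) (tperm_sets p p' S) =
  (-1) ^+ ((p \in cover S) + (p' \in cover S)) * DS dd I S.
Proof.
move=> sifS; rewrite /DS prodr_imset_comm; last 2 first.
- exact: comm_Dset.
- exact: imset_inj (@perm_inj _ sw).
rewrite (eq_bigr (fun P => (-1) ^+ (\sum_(x in P) (x \in pp)) * Dset dd I P)) => [|P PS].
  rewrite prodrM_comm => [|P Q _ _]; last exact/commr_sym/commr_sign.
  by rewrite prodrXr -(big_trivIset _ (sif_trivIset sifS)) sum_mem_set2 // adj_neq.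
have [k [l [kl ->]]] := sif_set2 sifS PS.
rewrite tperm_set2 !Dset_set2 ?(inj_eq perm_inj) // Dpair_tperm_adj.
by rewrite big_setU1 ?big_set1 //= inE.
Qed.

Lemma dC_tperm_sets S :
  dC dgen (I \o sw) (tperm_sets p p' S) = \prod_(j < n) dC_factor dgen I S (sw j).
Proof.
by rewrite /dC big_mkcond; apply: eq_bigr => j _; rewrite /dC_factor cover_tperm_sets.
Qed.

Lemma summand_tperm_covered S : S \in sif n -> pp \notin S ->
  (p \in cover S) || (p' \in cover S) ->
  omega_summand dd dgen (I \o sw) (tperm_sets p p' S) = - omega_summand dd dgen I S.
Proof.
move=> sifS ppS cov.
rewrite /omega_summand ncross_tperm_sets // DS_tperm_sets // dC_tperm_sets.
rewrite prod_tperm_adj_comm -?dC_factorE //; last first.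
  rewrite /dC_factor /GRing.comm; move: cov.
  by case: (p \in cover S); case: (p' \in cover S) => //= _; rewrite ?mul1r ?mulr1.
have signCA e (x y : A) : x * ((-1) ^+ e * y) = (-1) ^+ e * (x * y).
  by rewrite mulrA commr_sign -mulrA.
rewrite signCA !mulrA -exprD -signr_odd.
move: cov; case: (p \in cover S); case: (p' \in cover S) => //= _;
  by rewrite expr1 !mulN1r !mulNr.
Qed.

Lemma summand_tperm_pair X : X \in sif n -> pp \in X ->
  omega_summand dd dgen (I \o sw) (tperm_sets p p' X) = omega_summand dd dgen I X.
Proof.
move=> sifX ppX; have pX : p \in cover X by apply: cover_mem ppX (set21 _ _).
have p'X : p' \in cover X by apply: cover_mem ppX (set22 _ _).
rewrite /omega_summand DS_tperm_sets // dC_tperm_sets prod_tperm_adj_comm -?dC_factorE //.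
  by rewrite tperm_sets_id ?ppX ?(sif_trivIset sifX) // pX p'X expr2 mulN1r opprK mul1r.
by rewrite /dC_factor pX p'X; apply: commr1.
Qed.

Section Uncovered.
Hypothesis two_neq0 : (2%:R : K) != 0.
Hypothesis hcent : forall i j k, dd i * dgen j k = dgen j k * dd i.
Hypothesis hbr : forall i j k l,
  dgen i j * dgen k l + dgen k l * dgen i j = (eps i j k l)%:~R * dd (tt i j k l).

Let g := dgen (I p).1 (I p).2.
Let g' := dgen (I p').1 (I p').2.
Let M := (eps (I p).1 (I p).2 (I p').1 (I p').2)%:~R
           * dd (tt (I p).1 (I p).2 (I p').1 (I p').2).

Lemma Dpair_adj_double : Dpair dd I p p' + Dpair dd I p p' = - M.
Proof.
have sgn : (-1) ^+ (p + p')%N = -1 :> A.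
  by rewrite hp addnS exprS -signr_odd oddD addbb expr0 mulr1.
rewrite /Dpair sgn mulN1r mulNr -scalerDl -/M.
have -> : (2%:R : K)^-1 + 2%:R^-1 = 1.
  by rewrite -[RHS](mulfV two_neq0) mulr_natl mulr2n.
exact: scale1r.
Qed.

Lemma summand_tperm_uncovered S : S \in sif n -> pp \notin S ->
  p \notin cover S -> p' \notin cover S ->
  omega_summand dd dgen (I \o sw) (tperm_sets p p' (pp |: S))
  + omega_summand dd dgen I (pp |: S)
  + (omega_summand dd dgen (I \o sw) (tperm_sets p p' S) + omega_summand dd dgen I S) = 0.
Proof.
move=> sifS ppS pS p'S.
have sifU : pp |: S \in sif n by rewrite sif_setU1 ?adj_neq ?sifS ?pS ?p'S.
rewrite summand_tperm_pair ?setU11 //.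
pose F := dC_factor dgen I S.
set L := \prod_(j < n | (j < p)%N) F j; set Rr := \prod_(j < n | (p' < j)%N) F j.
have Fp : F p = g by rewrite /F /dC_factor pS.
have Fp' : F p' = g' by rewrite /F /dC_factor p'S.
have dCS : dC dgen I S = L * (g * g') * Rr by rewrite dC_factorE (prod_ord_adj hp) -Fp -Fp'.
have dCS' : dC dgen (I \o sw) (tperm_sets p p' S) = L * (g' * g) * Rr.
  by rewrite dC_tperm_sets (prod_tperm_adj hp) -Fp -Fp'.
have dCU : dC dgen I (pp |: S) = L * Rr.
  have coverU : cover (pp |: S) = pp :|: cover S by rewrite /cover big_setU1.
  have dfU j : dC_factor dgen I (pp |: S) j = if j \in pp then 1 else F j.
    by rewrite /F /dC_factor coverU in_setU; case: (j \in pp).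
  rewrite dC_factorE (prod_ord_adj hp) !dfU set21 set22 mulr1 mulr1.
  by congr (_ * _); apply: eq_bigr => j jpp; rewrite dfU !inE -!val_eqE /= ifN //; lia.
have commM x : (forall i, GRing.comm x (dd i)) -> GRing.comm x M.
  by move=> xdd; apply: commrM; [apply: commr_int | apply: xdd].
have cMD : GRing.comm M (DS dd I S).
  by apply/commr_sym/commM => i; apply/commr_sym/comm_dd_DS.
have cML : GRing.comm M L.
  apply: commr_prod => j _; apply/commr_sym/commM => i; rewrite /F /dC_factor.
  by case: ifP => _; [apply/commr_sym; exact: hcent | exact/commr_sym/commr1].
rewrite /omega_summand (ncross_setU1_adj hp) // DS_setU1 // Dset_set2 ?adj_neq // dCU dCS dCS'.
rewrite DS_tperm_sets // (negbTE pS) (negbTE p'S) expr0 mul1r.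
rewrite tperm_sets_id ?(sif_trivIset sifS) ?pS ?p'S ?orbT //.
set c := (-1) ^+ _; set D := DS dd I S; set Dp := Dpair _ _ _ _.
have E1 : c * (Dp * D) * (L * Rr) + c * (Dp * D) * (L * Rr) = - (c * D * (L * M * Rr)).
  rewrite -mulrDl -mulrDr -mulrDl Dpair_adj_double; move: (M) cMD cML => m cmD cmL.
  by rewrite mulNr mulrN mulNr cmD -!mulrA (mulrA m) cmL -mulrA.
have E2 : c * D * (L * (g' * g) * Rr) + c * D * (L * (g * g') * Rr) = c * D * (L * M * Rr).
  by rewrite -mulrDr -mulrDl -mulrDr addrC hbr.
by rewrite E1 E2 addNr.
Qed.

Lemma omega_tperm_adj : omega dd dgen (I \o sw) = - omega dd dgen I.
Proof.
apply/eqP; rewrite -addr_eq0 !omegaE.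
rewrite (reindex_inj (can_inj (@tperm_setsK _ p p'))) /=.
under eq_bigl => S do rewrite sif_tperm_sets.
rewrite -big_split /= (bigID (fun S => pp \in S)) /=.
rewrite [X in _ + X](bigID (fun S => (p \notin cover S) && (p' \notin cover S))) /=.
rewrite [X in _ + (_ + X)]big1 ?addr0 => [|S /andP[/andP[sifS ppS] cov]]; last first.
  by rewrite summand_tperm_covered ?addNr //; move: cov; rewrite negb_and !negbK.
rewrite (reindex_onto (fun S => pp |: S) (fun S => S :\ pp)) /=; last first.
  by move=> S /andP[_ ppS]; rewrite setD1K.
rewrite (eq_bigl (fun S => (S \in sif n) && (pp \notin S) &&
                           ((p \notin cover S) && (p' \notin cover S)))) => [|S].
  rewrite -big_split; apply/eqP/big1 => S /andP[/andP[sifS ppS] /andP[pS p'S]].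
  exact: summand_tperm_uncovered.
have [ppS|ppS] := boolP (pp \in S).
  rewrite andbF /=; apply/negbTE; rewrite negb_and; apply/orP; right.
  by apply: contraTneq ppS => <-; rewrite setD11.
by rewrite (setU1K ppS) eqxx setU11 sif_setU1 ?adj_neq //= !andbT.
Qed.

End Uncovered.

End AdjacentSwap.

Definition bar_at n (I : 'I_n -> 'I_5 * 'I_5) (j : 'I_n) : 'I_n -> 'I_5 * 'I_5 :=
  fun x => if x == j then bar (I j) else I x.

Section BarAt.
Variables (K : fieldType) (A : algType K) (dd : 'I_5 -> A) (dgen : 'I_5 -> 'I_5 -> A).
Hypothesis hdd : forall i j, dd i * dd j = dd j * dd i.
Hypothesis hskew : forall i j, dgen i j = - dgen j i.
Variables (n : nat) (I : 'I_n -> 'I_5 * 'I_5) (j : 'I_n).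
Implicit Types (S : {set {set 'I_n}}) (P : {set 'I_n}).

Local Notation J := (bar_at I j).

Lemma Dset_bar_at_notin P : j \notin P -> Dset dd J P = Dset dd I P.
Proof.
rewrite /Dset; have := mem_enum (mem P); case: (enum P) => [|k [|l [|]]] // Pkl jP.
have [kj lj] : k != j /\ l != j.
  by split; apply: contraNneq jP => <-; rewrite -Pkl !inE eqxx ?orbT.
by rewrite /Dpair /bar_at (negbTE kj) (negbTE lj).
Qed.

Lemma Dset_bar_at_in P : #|P| = 2 -> j \in P -> Dset dd J P = - Dset dd I P.
Proof.
move=> /eqP/cards2P[k [l [kl ->]]]; rewrite !inE.
have Dpair_bar (m : 'I_n) : m != j -> Dset dd J [set j; m] = - Dset dd I [set j; m].
  move=> mj; rewrite !Dset_set2 1?eq_sym // /Dpair /bar_at eqxx (negbTE mj) /=.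
  by rewrite eps_swap12 tt_swap12 mulrNz mulrN mulNr scalerN.
case/orP=> /eqP E; [subst k | subst l; rewrite setUC]; apply: Dpair_bar.
- by rewrite eq_sym.
- by [].
Qed.

Lemma DS_bar_at S : S \in sif n ->
  DS dd J S = (if j \in cover S then - DS dd I S else DS dd I S).
Proof.
move=> sifS; case: ifPn => jS; last first.
  apply: eq_bigr => P PS; apply: Dset_bar_at_notin.
  by apply: contra jS; exact: cover_mem PS.
set P0 := pblock S j; have P0S : P0 \in S := pblock_mem jS.
rewrite -(setD1K P0S) !DS_setU1 ?setD11 // Dset_bar_at_in ?(sif_card sifS) ?mem_pblock //.
rewrite mulNr; congr (- (_ * _)); apply: eq_bigr => P; rewrite !inE => /andP[PP0 PS].
apply: Dset_bar_at_notin; apply: contra PP0 => jP.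
by rewrite /P0 (def_pblock (sif_trivIset sifS) PS jP).
Qed.

Lemma dC_bar_at S : dC dgen J S = (if j \in cover S then dC dgen I S else - dC dgen I S).
Proof.
case: ifPn => jS.
  by apply: eq_bigr => x xS; rewrite /bar_at; case: eqP => // xj; rewrite xj jS in xS.
rewrite /dC (eq_bigr (fun i => (-1) ^+ (i == j) * dgen (I i).1 (I i).2)) => [|i _]; last first.
  by rewrite /bar_at; case: eqP => [->|_] /=; rewrite ?mul1r // mulN1r [LHS]hskew.
rewrite prodrM_comm => [|*]; last exact/commr_sym/commr_sign.
rewrite prodrXr (bigD1 j) //= big1 => [|i /andP[_ /negbTE->]] //.
by rewrite eqxx addn0 expr1 mulN1r.
Qed.

Lemma omega_bar_at : omega dd dgen J = - omega dd dgen I.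
Proof.
rewrite !omegaE -sumrN; apply: eq_bigr => S sifS.
by rewrite /omega_summand DS_bar_at // dC_bar_at; case: ifP => _; rewrite ?mulrN ?mulNr.
Qed.

End BarAt.

Section Vanishing.
Variables (K : fieldType) (A : algType K) (dd : 'I_5 -> A) (dgen : 'I_5 -> 'I_5 -> A).
Hypothesis two_neq0 : (2%:R : K) != 0.
Hypothesis hskew : forall i j, dgen i j = - dgen j i.
Hypothesis hdd : forall i j, dd i * dd j = dd j * dd i.
Hypothesis hcent : forall i j k, dd i * dgen j k = dgen j k * dd i.
Hypothesis hbr : forall i j k l,
  dgen i j * dgen k l + dgen k l * dgen i j = (eps i j k l)%:~R * dd (tt i j k l).
Variable n : nat.
Implicit Type I : 'I_n -> 'I_5 * 'I_5.

Lemma eq_omega I1 I2 : I1 =1 I2 -> omega dd dgen I1 = omega dd dgen I2.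
Proof.
move=> I12; apply: eq_bigr => S _; congr (_ * _ * _).
  apply: eq_bigr => P _; rewrite /Dset.
  by case: (enum P) => [|k [|l [|]]] //; rewrite /Dpair !I12.
by apply: eq_bigr => i _; rewrite I12.
Qed.

Lemma omega_eq0_of_eq_dist (d : nat) :
  forall I (j k : 'I_n), k = (j + d.+1)%N :> nat -> I j = I k -> omega dd dgen I = 0.
Proof.
elim: d => [|d IH] I j k hk Ijk.
  apply: (eq_opp_eq0 two_neq0); rewrite -(omega_tperm_adj hdd (p := j) (p' := k)) //.
    by apply: eq_omega => x /=; case: tpermP => [->|->|//]; rewrite Ijk.
  by rewrite hk addn1.
have k'n : (k.-1 < n)%N by have := ltn_ord k; lia.
pose k' := Ordinal k'n; have hk' : k = k'.+1 :> nat by rewrite /= hk addnS.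
rewrite -[omega _ _ _]opprK -(omega_tperm_adj hdd hk') //.
rewrite (IH _ j k') ?oppr0 //=; first by rewrite hk; lia.
by rewrite tpermL tpermD // -val_eqE /= hk; lia.
Qed.

Lemma omega_eq0_of_eq I (j k : 'I_n) : (j < k)%N -> I j = I k -> omega dd dgen I = 0.
Proof. by move=> jk; apply: (omega_eq0_of_eq_dist (d := k - j.+1)); lia. Qed.

Lemma omega_eq0_of_bar I (j k : 'I_n) : (j <= k)%N -> I j = bar (I k) ->
  omega dd dgen I = 0.
Proof.
move=> jk Ijk; have Ibar := omega_bar_at hdd hskew I j.
have [ejk|njk] := eqVneq j k.
  subst k; apply: (eq_opp_eq0 two_neq0); rewrite -Ibar.
  by apply: eq_omega => x; rewrite /bar_at; case: eqP => // ->.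
have jk' : (j < k)%N by rewrite ltn_neqAle jk andbT.
rewrite -[omega _ _ I]opprK -Ibar (omega_eq0_of_eq jk') ?oppr0 //.
by rewrite /bar_at eqxx eq_sym (negbTE njk) Ijk; case: (I k).
Qed.

End Vanishing.

Theorem corollary5p7 (K : fieldType) (hK : [pchar K] =i pred0)
    (A : algType K) (dd : 'I_5 -> A) (dgen : 'I_5 -> 'I_5 -> A)
    (hskew : forall i j, dgen i j = - dgen j i)
    (hdd : forall i j, dd i * dd j = dd j * dd i)
    (hcent : forall i j k, dd i * dgen j k = dgen j k * dd i)
    (hbr : forall i j k l,
       dgen i j * dgen k l + dgen k l * dgen i j = (eps i j k l)%:~R * dd (tt i j k l))
    (n : nat) (I : 'I_n -> 'I_5 * 'I_5) :
  (exists j k : 'I_n, (j < k)%N /\ I j = I k) \/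
  (exists j k : 'I_n, (j <= k)%N /\ I j = bar (I k)) ->
  omega dd dgen I = 0.
Proof.
have two_neq0 : (2%:R : K) != 0 by rewrite ((pcharf0P K).1 hK 2).
case=> [[j [k [jk Ijk]]] | [j [k [jk Ijk]]]].
- exact: omega_eq0_of_eq Ijk.
- exact: omega_eq0_of_bar Ijk.
Qed.
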